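(* Let $\kappa=(k_0,k_1,k_2,\dots)$ be an infinite sequence of natural numbers with $k_i>1$ for all $i$, and let $\sigma\kappa=(k_1,k_2,\dots)$ denote its shift. Define $E_\kappa$ on finite sequences of natural numbers by $$E_\kappa([\,])=0,\qquad E_\kappa([x_0,x_1,\dots,x_m])=C_{k_0}\big(x_0,\,E_{\sigma\kappa}([x_1,\dots,x_m])\big).$$ Then $E_\kappa$ is a bijection from the set of finite sequences of natural numbers onto $\mathbb{N}$. In particular, for each $b>1$ the map $\mathrm{nats2nat}_b:=E_{(b,b,b,\dots)}$ is a bijection between finite sequences of naturals and $\mathbb{N}$. Its inverse $\mathrm{nat2nats}_b$ is given by $\mathrm{nat2nats}_b(0)=[\,]$ and, for $n>0$, $\mathrm{nat2nats}_b(n)=x:\mathrm{nat2nats}_b(y')$, where $(x,y')=C_b^{-1}(n)$.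
   Context: $\mathbb{N}=\{0,1,2,\dots\}$. For $b>1$, $C_b:\mathbb{N}\times\mathbb{N}\to\mathbb{N}\setminus\{0\}$ is defined by $C_b(x,y')=b^x\,(y'+\lfloor y'/(b-1)\rfloor+1)$. This map is a bijection; its first component is $x=\nu_b(n)$, the $b$-adic valuation of $n$. The notation $x:s$ denotes the sequence with first element $x$ followed by the sequence $s$. *)

From mathcomp Require Import all_boot.
Set Implicit Arguments. Unset Strict Implicit. Unset Printing Implicit Defensive.

Definition C (b x y' : nat) : nat := b ^ x * (y' + y' %/ (b - 1) + 1).

Definition shift (kappa : nat -> nat) : nat -> nat := fun i => kappa i.+1.

Fixpoint E (kappa : nat -> nat) (s : seq nat) : nat :=
  match s with
  | [::] => 0
  | x :: s' => C (kappa 0) x (E (shift kappa) s')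
  end.

Definition nats2nat (b : nat) : seq nat -> nat := E (fun _ => b).

From mathcomp Require Import all_boot.
From mathcomp Require Import zify.

(* Fix a base b > 1 and write  C b x y = b ^ x * nondiv b y  with
   nondiv b y = y + y %/ (b - 1) + 1.  The map  nondiv b  enumerates, in
   increasing order, the positive integers not divisible by b, and every
   n > 0 factors uniquely as b ^ x * m with b not dividing m.  Hence C b is
   a bijection from nat * nat onto the positive integers; moreover, in
   C b x y = n the second argument is strictly smaller than n.
   For E kappa this gives injectivity by induction on the sequence (E is 0
   only on [::] and C is injective) and surjectivity by strong induction on
   the target n (peel off n = C (kappa 0) x y with y < n and recurse on the
   shifted kappa).  A surjective injection out of a choice type has an
   inverse, which yields bijectivity; specialising to the constant sequence
   b, the inverse nat2nats satisfies the recursive description because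
   nats2nat b (x :: s) = C b x (nats2nat b s). *)

(* The y-th (from 0) positive integer that is not a multiple of b. *)
Definition nondiv (b y : nat) : nat := y + y %/ (b - 1) + 1.

Lemma C_nondiv b x y : C b x y = b ^ x * nondiv b y.
Proof. by []. Qed.

Lemma inj_surj_bij (T : choiceType) (U : eqType) (f : T -> U) :
  injective f -> (forall u, exists t, f t = u) -> bijective f.
Proof.
move=> f_inj f_surj.
have surjb u : exists t, f t == u by have [t <-] := f_surj u; exists t.
pose g u := xchoose (surjb u).
have fgK : cancel g f by move=> u; apply/eqP; exact: (xchooseP (surjb u)).
by exists g => // t; apply: f_inj; rewrite fgK.
Qed.

Section Base.

Variable b : nat.
Hypothesis b_gt1 : 1 < b.

Lemma nondivE y :
  nondiv b y = y %/ (b - 1) * b + (y %% (b - 1)).+1 /\ y %% (b - 1) < b - 1.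
Proof.
have r_lt : y %% (b - 1) < b - 1 by rewrite ltn_mod; lia.
split=> //; rewrite /nondiv {1}(divn_eq y (b - 1)).
move: r_lt; set q := y %/ (b - 1); set r := y %% (b - 1) => _.
have -> : b = (b - 1).+1 by lia.
nia.
Qed.

Lemma nondiv_ndvd y : ~~ (b %| nondiv b y).
Proof.
have [-> r_lt] := nondivE y.
rewrite dvdn_addr ?dvdn_mull // gtnNdvd //; lia.
Qed.

Lemma nondiv_inj : injective (nondiv b).
Proof.
move=> y1 y2; rewrite /nondiv => e.
by have [h|h|//] := ltngtP y1 y2; have := leq_div2r (b - 1) (ltnW h); lia.
Qed.

Lemma nondiv_surj m : ~~ (b %| m) -> exists y, nondiv b y = m.
Proof.
move=> m_ndvd.
have r_gt0 : 0 < m %% b by rewrite lt0n -/(dvdn b m).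
have r_lt : m %% b < b by rewrite ltn_mod; lia.
exists (m %/ b * (b - 1) + (m %% b).-1).
rewrite /nondiv divnMDl; last lia.
rewrite (divn_small (m := (m %% b).-1)); last lia.
rewrite addn0 {4}(divn_eq m b).
move: r_gt0 r_lt; set q := m %/ b; set r := m %% b => r_gt0 r_lt.
have -> : b = (b - 1).+1 by lia.
nia.
Qed.

Lemma pow_factor_inj x1 x2 m1 m2 : ~~ (b %| m1) -> ~~ (b %| m2) ->
  b ^ x1 * m1 = b ^ x2 * m2 -> x1 = x2 /\ m1 = m2.
Proof.
move=> m1_ndvd m2_ndvd; elim: x1 x2 => [|x1 IH] [|x2].
- by rewrite !mul1n.
- by rewrite mul1n expnS -mulnA => e; rewrite e dvdn_mulr in m1_ndvd.
- by rewrite mul1n expnS -mulnA => e; rewrite -e dvdn_mulr in m2_ndvd.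
- rewrite !expnS -!mulnA => /eqP; rewrite eqn_pmul2l; last lia.
  by move=> /eqP /IH [-> ->].
Qed.

Lemma pow_factor_exists n : 0 < n -> exists x m, ~~ (b %| m) /\ n = b ^ x * m.
Proof.
elim: n {-2}n (leqnn n) => [|N IH] n n_le n_gt0; first lia.
have [b_dvd | b_ndvd] := boolP (b %| n); last by exists 0, n; rewrite mul1n.
have n_eq : n = b * (n %/ b) by rewrite mulnC divnK.
have q_gt0 : 0 < n %/ b by rewrite divn_gt0 ?(ltnW b_gt1) // dvdn_leq.
have q_lt : n %/ b < n by rewrite ltn_Pdiv.
have [x [m [m_ndvd q_eq]]] := IH (n %/ b) ltac:(lia) q_gt0.
by exists x.+1, m; rewrite n_eq q_eq expnS mulnA.
Qed.

Lemma C_gt0 x y : 0 < C b x y.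
Proof. by rewrite /C muln_gt0 expn_gt0 (ltnW b_gt1) addn1. Qed.

Lemma C_inj x1 y1 x2 y2 : C b x1 y1 = C b x2 y2 -> x1 = x2 /\ y1 = y2.
Proof.
rewrite !C_nondiv => e.
have [-> /nondiv_inj ->] := pow_factor_inj _ _ _ _ (nondiv_ndvd y1) (nondiv_ndvd y2) e.
by [].
Qed.

Lemma C_surj n : 0 < n -> exists x y, C b x y = n /\ y < n.
Proof.
move=> n_gt0; have [x [m [m_ndvd ->]]] := pow_factor_exists _ n_gt0.
have [y <-] := nondiv_surj _ m_ndvd.
exists x, y; split => //.
have : 0 < b ^ x by rewrite expn_gt0 (ltnW b_gt1).
rewrite /nondiv; move: (b ^ x) (y %/ (b - 1)) => p q; nia.
Qed.

End Base.

Lemma E_inj kappa : (forall i, 1 < kappa i) -> injective (E kappa).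
Proof.
move=> kappa_gt1 s1.
elim: s1 kappa kappa_gt1 => [|x1 s1 IH] kappa kappa_gt1 [|x2 s2] //=.
- by move=> e; have := C_gt0 _ (kappa_gt1 0) x2 (E (shift kappa) s2); rewrite -e.
- by move=> e; have := C_gt0 _ (kappa_gt1 0) x1 (E (shift kappa) s1); rewrite e.
- move=> /(C_inj _ (kappa_gt1 0)) [-> e]; congr (_ :: _).
  exact: IH (fun i => kappa_gt1 i.+1) _ e.
Qed.

Lemma E_surj kappa : (forall i, 1 < kappa i) -> forall n, exists s, E kappa s = n.
Proof.
move=> kappa_gt1 n.
elim: n {-2}n (leqnn n) kappa kappa_gt1 => [|N IH] [|n] n_le kappa kappa_gt1;
  try by exists [::].
have [x [y [Cxy y_lt]]] := C_surj _ (kappa_gt1 0) _ (ltn0Sn n).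
have [s Es] := IH y ltac:(lia) (shift kappa) (fun i => kappa_gt1 i.+1).
by exists (x :: s); rewrite /= Es.
Qed.

Lemma E_bij kappa : (forall i, 1 < kappa i) -> bijective (E kappa).
Proof. by move=> kappa_gt1; apply: inj_surj_bij; [apply: E_inj | apply: E_surj]. Qed.

(* The constant sequence is its own shift, so nats2nat b unfolds through C b. *)
Lemma nats2nat_cons b x s : nats2nat b (x :: s) = C b x (nats2nat b s).
Proof. by []. Qed.

Theorem mainTheorem3 :
  (forall kappa : nat -> nat, (forall i, 1 < kappa i) -> bijective (E kappa)) /\
  (forall b : nat, 1 < b ->
     bijective (nats2nat b) /\
     exists nat2nats : nat -> seq nat,
       [/\ cancel (nats2nat b) nat2nats, cancel nat2nats (nats2nat b),
           nat2nats 0 = [::] &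
           forall n x y', 0 < n -> C b x y' = n ->
             nat2nats n = x :: nat2nats y']).
Proof.
split=> [kappa | b b_gt1]; first exact: E_bij.
have const_gt1 (i : nat) : 1 < b by [].
have nats2nat_inj : injective (nats2nat b) := E_inj (fun _ => b) const_gt1.
have nats2nat_bij : bijective (nats2nat b) := E_bij (fun _ => b) const_gt1.
split=> //; have [nat2nats natsK nat2natsK] := nats2nat_bij.
exists nat2nats; split=> //.
- by apply: nats2nat_inj; rewrite nat2natsK.
- move=> n x y' _ <-; apply: nats2nat_inj.
  by rewrite nats2nat_cons !nat2natsK.
Qed.
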